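(* Let $\alpha>0$, $\eta=\alpha/(L+\alpha)$, and consider AggGCG (primal) from $y_0\in\mathrm{dom}\, h$, $s_0\in\mathbb{R}^n$: for $k\ge0$, $x_{k+1}=\mathrm{argmin}_x\{\langle s_k,x\rangle+h^\alpha(x)\}$, $y_{k+1}=(1-\eta)y_k+\eta x_{k+1}$, $s_{k+1}=(1-\eta)s_k+\eta\nabla f(y_k)$. Then for all $k\ge0$: (a) $f(y_{k+1})\le(1-\eta)f(y_k)-\eta f^*(\nabla f(y_k))+\eta\langle\nabla f(y_k),x_{k+1}\rangle+\frac{L\eta^2}{2}\|x_{k+1}-y_k\|^2$; (b) $(h^\alpha)^*(-s_{k+1})\le(1-\eta)(h^\alpha)^*(-s_k)-\eta h^\alpha(x_{k+1})-\eta\langle x_{k+1},\nabla f(y_k)\rangle+\frac{\eta^2}{2\alpha}\|\nabla f(y_k)-s_k\|_*^2$; (c) $h^\alpha(y_{k+1})\le\eta h^\alpha(x_{k+1})+(1-\eta)h^\alpha(y_k)-\frac{\alpha\eta(1-\eta)}{2}\|x_{k+1}-y_k\|^2$; (d) $f^*(s_{k+1})\le\eta f^*(\nabla f(y_k))+(1-\eta)f^*(s_k)-\frac{\eta(1-\eta)}{2L}\|\nabla f(y_k)-s_k\|_*^2$.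
   Context: Let $\|\cdot\|$ be a norm on $\mathbb{R}^n$ with dual norm $\|\cdot\|_*$. Let $f:\mathbb{R}^n\to\mathbb{R}$ be convex, differentiable and $L$-smooth ($L>0$) with respect to $\|\cdot\|$, $h:\mathbb{R}^n\to(-\infty,\infty]$ closed proper convex with bounded domain, and $w:\mathbb{R}^n\to[0,+\infty]$ closed, $1$-strongly convex with respect to $\|\cdot\|$ on $\mathrm{dom}\, h$, with $\max_{\mathrm{dom}\, h}w<\infty$. Let $h^\alpha=h+\alpha w$; $^*$ denotes convex conjugate. *)

From HB Require Import structures.
From mathcomp Require Import all_boot all_order all_algebra.
From mathcomp Require Import all_classical all_reals all_analysis.
Set Implicit Arguments. Unset Strict Implicit. Unset Printing Implicit Defensive.
Import Order.TTheory GRing.Theory Num.Theory.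
Import numFieldNormedType.Exports.
Local Open Scope classical_set_scope.
Local Open Scope ring_scope.

Definition dotp (R : realType) (n : nat) (u v : 'rV[R]_n) : R :=
  \sum_(i < n) u 0 i * v 0 i.

Definition is_norm (R : realType) (n : nat) (nrm : 'rV[R]_n -> R) : Prop :=
  [/\ forall x, nrm x = 0 -> x = 0,
      forall (a : R) x, nrm (a *: x) = `|a| * nrm x
    & forall x y, nrm (x + y) <= nrm x + nrm y].

Definition dual_norm (R : realType) (n : nat) (nrm : 'rV[R]_n -> R)
  (g : 'rV[R]_n) : R :=
  sup [set dotp g x | x in [set x | nrm x <= 1]].

Definition conj_ext (R : realType) (n : nat) (F : 'rV[R]_n -> \bar R)
  (s : 'rV[R]_n) : \bar R :=
  ereal_sup [set ((dotp s x)%:E - F x)%E | x in [set: 'rV[R]_n]].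

Definition conj_fun (R : realType) (n : nat) (f : 'rV[R]_n -> R) :
  'rV[R]_n -> \bar R := conj_ext (fun x => (f x)%:E).

Definition edom (R : realType) (n : nat) (F : 'rV[R]_n -> \bar R) :
  set 'rV[R]_n := [set x | (F x < +oo)%E].

Definition convex_fun (R : realType) (n : nat) (f : 'rV[R]_n -> R) : Prop :=
  forall (x y : 'rV[R]_n) (t : R), 0 <= t <= 1 ->
    f (t *: x + (1 - t) *: y) <= t * f x + (1 - t) * f y.

Definition convex_ext (R : realType) (n : nat) (F : 'rV[R]_n -> \bar R) : Prop :=
  forall (x y : 'rV[R]_n) (t : R), 0 <= t <= 1 ->
    (F (t *: x + (1 - t) *: y)%R <= t%:E * F x + (1 - t)%:E * F y)%E.

Definition proper_ext (R : realType) (n : nat) (F : 'rV[R]_n -> \bar R) : Prop :=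
  (forall x, F x != -oo%E) /\ exists x, (F x < +oo)%E.

(* closed = lower semicontinuous = all sublevel sets closed *)
Definition closed_ext (R : realType) (n : nat) (F : 'rV[R]_n -> \bar R) : Prop :=
  forall t : R, closed [set x | (F x <= t%:E)%E].

Definition strongly_convex_on (R : realType) (n : nat) (nrm : 'rV[R]_n -> R)
  (mu : R) (D : set 'rV[R]_n) (F : 'rV[R]_n -> \bar R) : Prop :=
  forall (x y : 'rV[R]_n) (t : R), D x -> D y -> 0 <= t <= 1 ->
    (F (t *: x + (1 - t) *: y)%R <= t%:E * F x + (1 - t)%:E * F y
       - (mu * t * (1 - t) / 2 * nrm (x - y) ^+ 2)%:E)%E.

Definition halpha (R : realType) (n : nat) (h w : 'rV[R]_n -> \bar R) (alpha : R) :
  'rV[R]_n -> \bar R := fun x => (h x + alpha%:E * w x)%E.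

From HB Require Import structures.
From mathcomp Require Import all_boot all_order all_algebra.
From mathcomp Require Import all_classical all_reals all_analysis.
From mathcomp Require Import ring lra.
Import Order.TTheory GRing.Theory Num.Theory.
Import numFieldNormedType.Exports.
Local Open Scope classical_set_scope.
Local Open Scope ring_scope.

(** (a) is the descent lemma for the L-smooth f along x_{k+1} - y_k, combined
    with the Fenchel-Young equality f*(∇f y) = <∇f y, y> - f y, and (c) is the
    α-strong convexity of h^α.  (b) and (d) say that (h^α)* is (1/α)-smooth and
    f* is (1/L)-strongly convex.  For (b): since x_{k+1} minimises the
    α-strongly convex function <s_k, .> + h^α, this function exceeds its
    minimum by at least α/2 ‖z - x_{k+1}‖² at every z, which absorbs the
    linear perturbation by η(∇f(y_k) - s_k) up to η²/(2α) ‖∇f(y_k) - s_k‖_*²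
    (AM-GM).  For (d): smoothness gives, for every z and every v,
    f*(v) ≥ <v, z> - f z + ‖v - ∇f z‖_*² / (2L), and
    t(1-t)(a+b)² ≤ t b² + (1-t) a² combines these bounds at v = ∇f(y_k) and
    v = s_k through the triangle inequality for ‖.‖_*. *)

Set Implicit Arguments.
Unset Strict Implicit.
Unset Printing Implicit Defensive.

Lemma le0_of_le_mul_small (R : realFieldType) (q c : R) : 0 <= c ->
  (forall t, 0 < t < 1 -> q <= t * c) -> q <= 0.
Proof.
move=> c_ge0 qc; apply/ler_addgt0Pr => e e_gt0; rewrite add0r.
have d_gt0 : 0 < c + e + e by lra.
apply: le_trans (qc (e / (c + e + e)) _) _.
  by rewrite divr_gt0 //= ltr_pdivrMr // mul1r; lra.
by rewrite mulrAC ler_pdivrMr // ler_wpM2l ?(ltW e_gt0) //; lra.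
Qed.

Lemma convex_comb_sqr_le (R : realDomainType) (t a b : R) :
  t * (1 - t) * (a + b) ^+ 2 <= t * b ^+ 2 + (1 - t) * a ^+ 2.
Proof.
rewrite -subr_ge0.
have -> : t * b ^+ 2 + (1 - t) * a ^+ 2 - t * (1 - t) * (a + b) ^+ 2
  = ((1 - t) * a - t * b) ^+ 2 by ring.
exact: sqr_ge0.
Qed.

Section InnerProduct.
Variables (R : realType) (n : nat).
Implicit Types u v z : 'rV[R]_n.

Lemma dotpC u v : dotp u v = dotp v u.
Proof. by apply: eq_bigr => i _; rewrite mulrC. Qed.

Lemma dotpDl u v z : dotp (u + v) z = dotp u z + dotp v z.
Proof.
by rewrite /dotp -big_split; apply: eq_bigr => i _; rewrite mxE mulrDl.
Qed.

Lemma dotpZl a u z : dotp (a *: u) z = a * dotp u z.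
Proof.
by rewrite /dotp mulr_sumr; apply: eq_bigr => i _; rewrite mxE mulrA.
Qed.

Lemma dotpNl u z : dotp (- u) z = - dotp u z.
Proof. by rewrite -scaleN1r dotpZl mulN1r. Qed.

Lemma dotpBl u v z : dotp (u - v) z = dotp u z - dotp v z.
Proof. by rewrite dotpDl dotpNl. Qed.

Lemma dotpDr u v z : dotp z (u + v) = dotp z u + dotp z v.
Proof. by rewrite !(dotpC z) dotpDl. Qed.

Lemma dotpZr a u z : dotp z (a *: u) = a * dotp z u.
Proof. by rewrite !(dotpC z) dotpZl. Qed.

Lemma dotpNr u z : dotp z (- u) = - dotp z u.
Proof. by rewrite !(dotpC z) dotpNl. Qed.

Lemma dotpBr u v z : dotp z (u - v) = dotp z u - dotp z v.
Proof. by rewrite dotpDr dotpNr. Qed.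

Lemma dotp0r z : dotp z 0 = 0.
Proof. by rewrite -(scale0r (0 : 'rV[R]_n)) dotpZr mul0r. Qed.

Lemma ler_coord_mx_norm z i : `|z 0 i| <= `|z|.
Proof.
rewrite [`|z|]mx_normrE; apply: le_trans (le_bigmax _ _ (ord0, i)) => /=.
by rewrite ord1.
Qed.

End InnerProduct.

Section Norm.
Variables (R : realType) (n : nat) (nrm : 'rV[R]_n -> R).
Hypothesis nrmP : is_norm nrm.
Implicit Types x y g : 'rV[R]_n.

Lemma nrmZ a x : nrm (a *: x) = `|a| * nrm x.
Proof. by case: nrmP. Qed.

Lemma ler_nrmD x y : nrm (x + y) <= nrm x + nrm y.
Proof. by case: nrmP. Qed.

Lemma nrm0 : nrm 0 = 0.
Proof. by rewrite -(scale0r (0 : 'rV[R]_n)) nrmZ normr0 mul0r. Qed.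

Lemma nrmN x : nrm (- x) = nrm x.
Proof. by rewrite -scaleN1r nrmZ normrN normr1 mul1r. Qed.

Lemma nrm_ge0 x : 0 <= nrm x.
Proof. by have := ler_nrmD x (- x); rewrite subrr nrm0 nrmN; lra. Qed.

Lemma nrm_gt0 x : x != 0 -> 0 < nrm x.
Proof.
move=> x_neq0; rewrite lt_def nrm_ge0 andbT.
by apply: contraNneq x_neq0; case: nrmP => nrm_eq0 _ _ /nrm_eq0 ->.
Qed.

Lemma nrm_le_mx_norm : exists2 C, 0 < C & forall x, nrm x <= C * `|x|.
Proof.
exists (1 + \sum_(i < n) nrm (delta_mx 0 i)).
  by rewrite ltr_pwDl // sumr_ge0 // => i _; exact: nrm_ge0.
move=> x; rewrite mulrDl mul1r; apply: ler_wpDl => //.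
rewrite {1}(row_sum_delta x) mulr_suml.
elim/big_rec2: _ => [|i a b _ ab]; first by rewrite nrm0.
apply: le_trans (ler_nrmD _ _) _; rewrite mulrC nrmZ lerD //.
by rewrite ler_wpM2r ?nrm_ge0 ?ler_coord_mx_norm.
Qed.

Lemma nrm_continuous : continuous nrm.
Proof.
have [C C_gt0 nrm_le] := nrm_le_mx_norm.
move=> x; apply/(@cvgrPdist_lt _ _ _ (nbhs x) (nbhs_filter x)) => e e_gt0.
apply/nbhs_ballP; exists (e / C); first exact: divr_gt0.
move=> y; rewrite -ball_normE /= => xy_lt.
have le_xy : nrm (x - y) < e.
  by apply: le_lt_trans (nrm_le _) _; rewrite mulrC -ltr_pdivlMr.
have le_yx : nrm (y - x) < e by rewrite -opprB nrmN.
have := ler_nrmD (x - y) y; have := ler_nrmD (y - x) x.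
rewrite !subrK ltr_norml => ? ?; apply/andP; split; lra.
Qed.

Lemma mx_norm_le_nrm : exists2 c, 0 < c & forall x, `|x| <= c * nrm x.
Proof.
have [[x0 x0_neq0]|] := pselect (exists x : 'rV[R]_n, x != 0); last first.
  move=> all0; exists 1 => // x; have -> : x = 0.
    by apply: contra_notP all0 => /eqP; exists x.
  by rewrite normr0 nrm0 mulr0.
pose S := [set x : 'rV[R]_n | `|x| = 1].
have unit_in_S x : x != 0 -> S (`|x|^-1 *: x).
  move=> x_neq0; rewrite /S /= normrZ normrV ?unitfE ?normr_eq0 //.
  by rewrite normr_id mulVf // normr_eq0.
have S_compact : compact S.
  apply: bounded_closed_compact.
    by exists 1; split => // M M_gt1 x /= ->; exact: ltW.
  exact: (continuous_closedP _).1 (@norm_continuous _ _) _ (@closed_eq _ 1).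
have [c /[!inE] c_in c_min] :=
  EVT_min_rV (ex_intro _ _ (unit_in_S _ x0_neq0)) S_compact
    (continuous_subspaceT nrm_continuous).
have c_gt0 : 0 < nrm c.
  apply: nrm_gt0; apply: contra_eq_neq c_in => ->.
  by rewrite normr0 eq_sym oner_neq0.
exists (nrm c)^-1; first by rewrite invr_gt0.
move=> x; have [->|x_neq0] := eqVneq x 0; first by rewrite normr0 nrm0 mulr0.
have x_gt0 : 0 < `|x| by rewrite normr_gt0.
have := c_min _ (mem_set (unit_in_S _ x_neq0)).
rewrite nrmZ normrV ?unitfE ?normr_eq0 // normr_id => cx.
rewrite -(ler_pM2l c_gt0) mulrA mulfV ?gt_eqF // mul1r mulrC.
by rewrite -(ler_pM2l x_gt0) mulrA mulfV ?gt_eqF // mul1r in cx.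
Qed.

Lemma dual_norm_ub g x : nrm x <= 1 -> dotp g x <= dual_norm nrm g.
Proof.
move=> x_le1; apply: ub_le_sup; last by exists x.
have [c c_gt0 mx_le] := mx_norm_le_nrm.
exists ((\sum_(i < n) `|g 0 i|) * c) => _ [u /= u_le1 <-].
rewrite /dotp mulr_suml; apply: ler_sum => i _.
apply: le_trans (ler_norm _) _; rewrite normrM ler_wpM2l //.
apply: le_trans (ler_coord_mx_norm _ _) _; apply: le_trans (mx_le u) _.
by rewrite ler_piMr // ltW.
Qed.

Lemma dual_norm_le g M :
  (forall x, nrm x <= 1 -> dotp g x <= M) -> dual_norm nrm g <= M.
Proof.
move=> le_M; apply: ge_sup => [|_ [x /= x_le1 <-]]; last exact: le_M.
by exists (dotp g 0), 0; rewrite //= nrm0.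
Qed.

Lemma dual_norm_ge0 g : 0 <= dual_norm nrm g.
Proof. by rewrite -(dotp0r g); apply: dual_norm_ub; rewrite nrm0. Qed.

Lemma dotp_le_dual_norm g x : dotp g x <= dual_norm nrm g * nrm x.
Proof.
have [->|x_neq0] := eqVneq x 0; first by rewrite dotp0r nrm0 mulr0.
have x_gt0 := nrm_gt0 x_neq0.
have := @dual_norm_ub g ((nrm x)^-1 *: x).
rewrite nrmZ ger0_norm ?invr_ge0 ?nrm_ge0 // mulVf ?gt_eqF // lexx dotpZr.
by rewrite -ler_pdivlMl ?invr_gt0 // invrK mulrC; apply.
Qed.

Lemma dual_normN g : dual_norm nrm (- g) = dual_norm nrm g.
Proof.
suff le_N u : dual_norm nrm (- u) <= dual_norm nrm u.
  by apply/eqP; rewrite eq_le le_N /= -{1}(opprK g) le_N.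
apply: dual_norm_le => x x_le1; rewrite dotpNl -dotpNr.
by apply: dual_norm_ub; rewrite nrmN.
Qed.

Lemma ler_dual_normD g1 g2 :
  dual_norm nrm (g1 + g2) <= dual_norm nrm g1 + dual_norm nrm g2.
Proof.
by apply: dual_norm_le => x x_le1; rewrite dotpDl lerD ?dual_norm_ub.
Qed.

End Norm.

Section Conjugate.
Variables (R : realType) (n : nat).
Implicit Types (F : 'rV[R]_n -> \bar R) (s x : 'rV[R]_n).

Lemma conj_ext_ge F s x : ((dotp s x)%:E - F x <= conj_ext F s)%E.
Proof. by apply: ereal_sup_ubound; exists x. Qed.

Lemma conj_ext_le F s B :
  (forall x, (dotp s x)%:E - F x <= B)%E -> (conj_ext F s <= B)%E.
Proof. by move=> le_B; apply: ge_ereal_sup => _ [x _ <-]. Qed.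

Lemma conj_fun_neqNy (f : 'rV[R]_n -> R) s : conj_fun f s != -oo%E.
Proof.
apply/eqP; rewrite /conj_fun => sE.
by have := conj_ext_ge (fun x => (f x)%:E) s 0; rewrite sE -EFinB leeNy_eq.
Qed.

End Conjugate.

Section Smooth.
Variables (R : realType) (n : nat) (f : 'rV[R]_n -> R).
Variable gradf : 'rV[R]_n -> 'rV[R]_n.
Hypothesis gradfP :
  forall z, differentiable f z /\ forall v, 'd f z v = dotp (gradf z) v.

Lemma derive_along_line (y d : 'rV[R]_n) (t : R) :
  is_derive t 1 (fun r : R => f (y + r *: d)) (dotp (gradf (y + t *: d)) d).
Proof.
have quotE : (fun r : R => r^-1 *: (((fun u : R => f (y + u *: d)) \o shift t)
      (r *: 1) - f (y + t *: d)))
    = (fun r : R =>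
         r^-1 *: ((f \o shift (y + t *: d)) (r *: d) - f (y + t *: d))).
  by apply: funext => r /=; rewrite [_%:A]mulr1 scalerDl addrCA.
have [f_diff dfE] := gradfP (y + t *: d).
apply: DeriveDef; first by rewrite /derivable quotE; exact: diff_derivable.
by rewrite /derive quotE -/(derive f _ d) deriveE.
Qed.

Lemma convex_grad_ineq : convex_fun f ->
  forall y u, f y + dotp (gradf y) (u - y) <= f u.
Proof.
move=> f_convex y u; set d := u - y; set D := dotp (gradf y) d.
pose phi := fun r : R => f (y + r *: d).
pose q := fun r : R => r^-1 *: ((phi \o shift 0) (r *: 1) - phi 0).
have D_der := derive_along_line y d 0; rewrite scale0r addr0 -/D in D_der.
have q_cvg : q @ 0^' --> D.
  have := @ex_derive _ _ _ _ _ _ _ D_der; rewrite /derivable -/q.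
  by have := @derive_val _ _ _ _ _ _ _ D_der; rewrite /derive -/q => ->.
have q_cvg_right : q @ at_right 0 --> D.
  apply: cvg_trans q_cvg => A /= [e e_gt0 eA].
  by exists e => //= r re /gt_eqF/negbT r_neq0; exact: eA.
suff : D <= f u - f y by lra.
apply: (cvgr_to_le q_cvg_right); near=> r.
have r_gt0 : 0 < r by near: r; exact: nbhs_right_gt.
have r_le1 : r <= 1 by near: r; exact: nbhs_right_le.
have := f_convex u y r; rewrite (ltW r_gt0) r_le1 => /(_ isT).
have -> : r *: u + (1 - r) *: y = y + r *: d.
  by rewrite /d scalerBr scalerBl scale1r addrCA.
rewrite /q /phi /= [_%:A]mulr1 addr0 scale0r addr0 /GRing.scale /=.
move=> convex_ineq; rewrite -(ler_pM2l r_gt0) mulrA mulfV ?gt_eqF // mul1r.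
lra.
Unshelve. all: by end_near.
Qed.

Lemma conj_fun_grad : convex_fun f ->
  forall y, conj_fun f (gradf y) = (dotp (gradf y) y - f y)%:E.
Proof.
move=> f_convex y; apply/eqP; rewrite eq_le EFinB conj_ext_ge andbT.
apply: conj_ext_le => u; rewrite -EFinB lee_fin.
by have := convex_grad_ineq f_convex y u; rewrite dotpBr; lra.
Qed.

Variables (nrm : 'rV[R]_n -> R) (L : R).
Hypothesis nrmP : is_norm nrm.
Hypothesis gradf_lipschitz :
  forall u v, dual_norm nrm (gradf u - gradf v) <= L * nrm (u - v).

Lemma smooth_descent (y d : 'rV[R]_n) :
  f (y + d) <= f y + dotp (gradf y) d + L / 2 * nrm d ^+ 2.
Proof.
set a := dotp (gradf y) d; set b := L / 2 * nrm d ^+ 2.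
pose phi := fun r : R => f (y + r *: d).
pose P : R -> R := a \*: (@id R) + b \*: ((@id R) ^+ 2).
(* the mean value theorem for phi - P, with P r = a r + b r², yields the
   constant L/2 rather than L *)
have der c : is_derive c (1 : R) (phi - P)
    (dotp (gradf (y + c *: d)) d - (a *: 1 + b *: ((2%:R * c ^+ 1) *: 1))).
  exact: is_deriveB (derive_along_line _ _ _) _.
have cont : {within `[0, 1], continuous (phi - P)}.
  by apply: derivable_within_continuous => r _; exact: ex_derive.
have [c /[!in_itv] /= /andP[c_gt0 _]] := MVT ltr01 (fun r _ => der r) cont.
move=> mvt; have {mvt} : f (y + 1 *: d) - (a * 1 + b * (1 * 1))
    - (f (y + 0 *: d) - (a * 0 + b * (0 * 0)))
  = (dotp (gradf (y + c *: d)) d - (a * 1 + b * (2 * c * 1))) * (1 - 0) := mvt.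
rewrite scale1r scale0r addr0 !mul0r !mulr0 !mulr1 addr0 !subr0 mulr1 => mvt.
have lip : dotp (gradf (y + c *: d) - gradf y) d <= L * c * nrm d ^+ 2.
  apply: le_trans (dotp_le_dual_norm nrmP _ _) _.
  have := gradf_lipschitz (y + c *: d) y.
  rewrite [y + _ - y]addrC addKr nrmZ // ger0_norm ?(ltW c_gt0) // => le_Lc.
  by rewrite expr2 mulrA ler_wpM2r ?nrm_ge0 // -mulrA.
move: lip mvt; rewrite dotpBl -/a /b; lra.
Qed.

Lemma smooth_affine_gap (v z : 'rV[R]_n) (B : R) : 0 < L ->
  (forall u, dotp v u - f u <= B) ->
  dotp v z - f z + dual_norm nrm (v - gradf z) ^+ 2 / (2 * L) <= B.
Proof.
move=> L_gt0 le_B; set a := dual_norm nrm (v - gradf z).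
set K := B - (dotp v z - f z).
suff : a ^+ 2 / (2 * L) <= K by rewrite /K; lra.
have [->|a_neq0] := eqVneq a 0; first by rewrite expr0n mul0r subr_ge0.
have a_gt0 : 0 < a by rewrite lt_def a_neq0 dual_norm_ge0.
set t := a / L; have t_gt0 : 0 < t by rewrite divr_gt0.
(* the bound B at z + t x, with the step t = a / L, controls <v - ∇f z, x> *)
have step x : nrm x <= 1 -> t * dotp (v - gradf z) x <= K + a ^+ 2 / (2 * L).
  move=> x_le1.
  have := le_B (z + t *: x); have := smooth_descent z (t *: x).
  rewrite dotpDr !dotpZr nrmZ // gtr0_norm // dotpBl.
  have quad : L / 2 * (t * nrm x) ^+ 2 <= a ^+ 2 / (2 * L).
    have -> : a ^+ 2 / (2 * L) = L / 2 * t ^+ 2 * 1.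
      by rewrite /t; field; rewrite gt_eqF.
    rewrite exprMn mulrA ler_wpM2l ?expr_le1 ?nrm_ge0 //.
    by rewrite mulr_ge0 ?sqr_ge0 // divr_ge0 // ltW.
  rewrite /K; lra.
have : a <= (K + a ^+ 2 / (2 * L)) / t.
  by apply: (dual_norm_le nrmP) => x /step; rewrite ler_pdivlMr // mulrC.
rewrite ler_pdivlMr // /t.
have -> : a * (a / L) = 2 * (a ^+ 2 / (2 * L)) by field; rewrite gt_eqF.
lra.
Qed.

Lemma conj_fun_ge_smooth (v z : 'rV[R]_n) : 0 < L ->
  ((dotp v z - f z + dual_norm nrm (v - gradf z) ^+ 2 / (2 * L))%:E
    <= conj_fun f v)%E.
Proof.
move=> L_gt0; case vE: (conj_fun f v) => [B| |]; last 2 first.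
- exact: leey.
- by move: (conj_fun_neqNy f v); rewrite vE.
rewrite lee_fin; apply: smooth_affine_gap => // u.
by rewrite -lee_fin EFinB -vE; exact: conj_ext_ge.
Qed.

Lemma smooth_step_conj (x y : 'rV[R]_n) (t : R) : convex_fun f ->
  ((f ((1 - t) *: y + t *: x))%:E <= (1 - t)%:E * (f y)%:E
     - t%:E * conj_fun f (gradf y)
     + (t * dotp (gradf y) x + L * t ^+ 2 / 2 * nrm (x - y) ^+ 2)%:E)%E.
Proof.
move=> f_convex; rewrite conj_fun_grad // -!EFinM -EFinB -EFinD lee_fin.
have -> : (1 - t) *: y + t *: x = y + t *: (x - y).
  by rewrite scalerBr scalerBl scale1r addrAC -addrA.
have := smooth_descent y (t *: (x - y)).
rewrite dotpZr dotpBr nrmZ // exprMn real_normK ?num_real //; lra.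
Qed.

Lemma conj_fun_strong_convex (g s : 'rV[R]_n) (t : R) : 0 < L -> 0 <= t <= 1 ->
  (conj_fun f ((1 - t) *: s + t *: g) <= t%:E * conj_fun f g
     + (1 - t)%:E * conj_fun f s
     - (t * (1 - t) / (2 * L) * dual_norm nrm (g - s) ^+ 2)%:E)%E.
Proof.
move=> L_gt0 /andP[t_ge0 t_le1]; apply: conj_ext_le => z.
set a := dual_norm nrm (s - gradf z); set b := dual_norm nrm (g - gradf z).
apply: le_trans (_ : ((t * (dotp g z - f z + b ^+ 2 / (2 * L))
    + (1 - t) * (dotp s z - f z + a ^+ 2 / (2 * L))
    - t * (1 - t) / (2 * L) * dual_norm nrm (g - s) ^+ 2)%:E <= _)%E).
  2: {
  rewrite EFinB EFinD [(t * _)%:E]EFinM [((1 - t) * _)%:E]EFinM.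
  rewrite leeB // leeD // lee_wpmul2l ?lee_fin ?subr_ge0 //.
  1,2: exact: conj_fun_ge_smooth. }
rewrite -EFinB lee_fin dotpDl !dotpZl.
have triangle : dual_norm nrm (g - s) <= a + b.
  have -> : g - s = - (s - gradf z) + (g - gradf z).
    by rewrite opprB [RHS]addrC addrA subrK.
  by apply: le_trans (ler_dual_normD nrmP _ _) _; rewrite dual_normN.
have sqr_le : t * (1 - t) * dual_norm nrm (g - s) ^+ 2
    <= t * b ^+ 2 + (1 - t) * a ^+ 2.
  apply: le_trans (convex_comb_sqr_le t a b).
  rewrite ler_wpM2l ?mulr_ge0 ?subr_ge0 // ler_pXn2r ?nnegrE //.
  - exact: dual_norm_ge0.
  - by rewrite addr_ge0 ?dual_norm_ge0.
have L2_ge0 : 0 <= (2 * L)^-1 by rewrite invr_ge0 mulr_ge0 // ltW.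
by move: sqr_le => /(ler_wpM2r L2_ge0); lra.
Qed.

End Smooth.

Section Regularized.
Variables (R : realType) (n : nat) (nrm : 'rV[R]_n -> R).
Variables (h w : 'rV[R]_n -> \bar R) (alpha : R).
Hypotheses (h_neqNy : forall z, h z != -oo%E) (h_convex : convex_ext h).
Hypotheses (w_ge0 : forall z, (0 <= w z)%E)
  (w_fin : forall z, edom h z -> (w z < +oo)%E)
  (w_strong_convex : strongly_convex_on nrm 1 (edom h) w).
Hypothesis alpha_gt0 : 0 < alpha.
Implicit Types z : 'rV[R]_n.

Local Notation ha := (halpha h w alpha).
Local Notation har z := (fine (ha z)).

Lemma h_EFin z : edom h z -> h z = (fine (h z))%:E.
Proof. by move=> z_dom; rewrite fineK // fin_numE h_neqNy lt_eqF. Qed.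

Lemma w_EFin z : edom h z -> w z = (fine (w z))%:E.
Proof. by move=> z_dom; rewrite fineK // ge0_fin_numE ?w_fin. Qed.

Lemma halpha_EFin z : edom h z -> ha z = (har z)%:E.
Proof.
by move=> z_dom; rewrite /halpha (h_EFin z_dom) (w_EFin z_dom) -EFinM -EFinD.
Qed.

Lemma halpha_pinfty z : ~ edom h z -> ha z = +oo%E.
Proof.
move=> /negP; rewrite -leNgt leye_eq => /eqP hz; rewrite /halpha hz addye //.
by rewrite gt_eqF // (lt_le_trans (ltNyr 0)) // mule_ge0 // lee_fin ltW.
Qed.

Lemma edom_convex z1 z2 t : edom h z1 -> edom h z2 -> 0 <= t <= 1 ->
  edom h (t *: z1 + (1 - t) *: z2).
Proof.
move=> z1_dom z2_dom t01; apply: le_lt_trans (h_convex z1 z2 t01) _.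
by rewrite (h_EFin z1_dom) (h_EFin z2_dom) -!EFinM -EFinD ltry.
Qed.

Lemma halpha_strong_convex z1 z2 t : edom h z1 -> edom h z2 -> 0 <= t <= 1 ->
  (ha (t *: z1 + (1 - t) *: z2) <= t%:E * ha z1 + (1 - t)%:E * ha z2
     - (alpha * t * (1 - t) / 2 * nrm (z1 - z2) ^+ 2)%:E)%E.
Proof.
move=> z1_dom z2_dom t01; have p_dom := edom_convex z1_dom z2_dom t01.
have := h_convex z1 z2 t01; have := w_strong_convex z1_dom z2_dom t01.
rewrite /halpha (h_EFin z1_dom) (h_EFin z2_dom) (h_EFin p_dom).
rewrite (w_EFin z1_dom) (w_EFin z2_dom) (w_EFin p_dom).
rewrite -!EFinM -!EFinD -?EFinM -?EFinD !lee_fin.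
move=> /(ler_wpM2l (ltW alpha_gt0)).
lra.
Qed.

Lemma argmin_edom s x z0 :
  (forall z, ((dotp s x)%:E + ha x <= (dotp s z)%:E + ha z)%E) ->
  edom h z0 -> edom h x.
Proof.
move=> x_min z0_dom; apply: contrapT => x_out; have := x_min z0.
by rewrite (halpha_pinfty x_out) (halpha_EFin z0_dom) addey.
Qed.

Section Argmin.
Variables (s x : 'rV[R]_n).
Hypothesis x_min :
  forall z, ((dotp s x)%:E + ha x <= (dotp s z)%:E + ha z)%E.
Hypothesis x_dom : edom h x.

Lemma argmin_real z : edom h z -> dotp s x + har x <= dotp s z + har z.
Proof.
move=> z_dom; have := x_min z.
by rewrite (halpha_EFin x_dom) (halpha_EFin z_dom).
Qed.

Lemma argmin_quadratic_growth z : edom h z ->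
  dotp s x + har x + alpha / 2 * nrm (z - x) ^+ 2 <= dotp s z + har z.
Proof.
move=> z_dom; rewrite -subr_le0.
apply: (@le0_of_le_mul_small _ _ (alpha / 2 * nrm (z - x) ^+ 2)).
  by rewrite mulr_ge0 ?sqr_ge0 // divr_ge0 // ltW.
move=> t /andP[t_gt0 t_lt1]; have t01 : 0 <= t <= 1 by rewrite !ltW.
have p_dom := edom_convex z_dom x_dom t01.
have := argmin_real p_dom; rewrite dotpDr !dotpZr => opt.
have := halpha_strong_convex z_dom x_dom t01.
rewrite (halpha_EFin z_dom) (halpha_EFin x_dom) (halpha_EFin p_dom).
rewrite -!EFinM -!EFinD lee_fin => sc.
have : t * (dotp s x + har x + alpha / 2 * nrm (z - x) ^+ 2 - (dotp s z + har z)
    - t * (alpha / 2 * nrm (z - x) ^+ 2)) <= 0 by lra.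
by rewrite pmulr_rle0 // subr_le0.
Qed.

Lemma conj_halpha_argmin : conj_ext ha (- s) = (- (dotp s x + har x))%:E.
Proof.
apply/eqP; rewrite eq_le; apply/andP; split; last first.
  by have := conj_ext_ge ha (- s) x; rewrite halpha_EFin // dotpNl -EFinB opprD.
apply: conj_ext_le => z; have [z_dom|z_out] := pselect (edom h z).
  rewrite halpha_EFin // -EFinB lee_fin dotpNl.
  by have := argmin_real z_dom; lra.
by rewrite halpha_pinfty // addeNy leNye.
Qed.

Hypothesis nrmP : is_norm nrm.

Lemma halpha_conj_smooth g t : 0 <= t ->
  (conj_ext ha (- ((1 - t) *: s + t *: g)) <= (1 - t)%:E * conj_ext ha (- s)
     - t%:E * ha x - (t * dotp x g)%:E
     + (t ^+ 2 / (2 * alpha) * dual_norm nrm (g - s) ^+ 2)%:E)%E.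
Proof.
move=> t_ge0; rewrite conj_halpha_argmin halpha_EFin //.
rewrite -!EFinM -!EFinB -EFinD; apply: conj_ext_le => z.
have [z_dom|z_out] := pselect (edom h z); last first.
  by rewrite halpha_pinfty // addeNy leNye.
rewrite halpha_EFin // -EFinB lee_fin.
have growth := argmin_quadratic_growth z_dom.
set D := dual_norm nrm (g - s); set r := nrm (z - x) in growth *.
have cs : dotp (s - g) (z - x) <= D * r.
  by rewrite /D -dual_normN // opprB; exact: dotp_le_dual_norm.
have amgm : t * (D * r) <= t ^+ 2 / (2 * alpha) * D ^+ 2 + alpha / 2 * r ^+ 2.
  rewrite -subr_ge0.
  have -> : t ^+ 2 / (2 * alpha) * D ^+ 2 + alpha / 2 * r ^+ 2 - t * (D * r)
      = (t * D - alpha * r) ^+ 2 / (2 * alpha) by field; rewrite gt_eqF.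
  by rewrite divr_ge0 ?sqr_ge0 // mulr_ge0 // ltW.
move: cs => /(ler_wpM2l t_ge0).
rewrite !dotpBl !dotpBr dotpNl dotpDl !dotpZl (dotpC x g); lra.
Qed.

End Argmin.

End Regularized.

Unset Implicit Arguments.
Set Strict Implicit.

Theorem lemmaC1 (R : realType) (n : nat) (nrm : 'rV[R]_n -> R)
  (f : 'rV[R]_n -> R) (gradf : 'rV[R]_n -> 'rV[R]_n) (L : R)
  (h w : 'rV[R]_n -> \bar R) (alpha : R)
  (x y s : nat -> 'rV[R]_n) :
  is_norm nrm ->
  (* f convex, differentiable with gradient gradf, L-smooth *)
  convex_fun f ->
  (forall z, differentiable f z /\ forall v, 'd f z v = dotp (gradf z) v) ->
  0 < L ->
  (forall u v, dual_norm nrm (gradf u - gradf v) <= L * nrm (u - v)) ->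
  (* h closed proper convex with bounded domain *)
  closed_ext h -> proper_ext h -> convex_ext h ->
  (exists M : R, forall z, edom h z -> nrm z <= M) ->
  (* w : R^n -> [0,+oo], closed, 1-strongly convex on dom h, bounded on dom h *)
  (forall z, (0 <= w z)%E) -> closed_ext w ->
  strongly_convex_on nrm 1 (edom h) w ->
  (exists M : R, forall z, edom h z -> (w z <= M%:E)%E) ->
  0 < alpha ->
  let eta := alpha / (L + alpha) in
  let ha := halpha h w alpha in
  (* AggGCG *)
  edom h (y 0%N) ->
  (forall k : nat, forall z,
      ((dotp (s k) (x k.+1))%:E + ha (x k.+1) <= (dotp (s k) z)%:E + ha z)%E) ->
  (forall k : nat, y k.+1 = (1 - eta) *: y k + eta *: x k.+1) ->
  (forall k : nat, s k.+1 = (1 - eta) *: s k + eta *: gradf (y k)) ->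
  forall k : nat,
  [/\ ((f (y k.+1))%:E <= (1 - eta)%:E * (f (y k))%:E
          - eta%:E * conj_fun f (gradf (y k))
          + (eta * dotp (gradf (y k)) (x k.+1)
             + L * eta ^+ 2 / 2 * nrm (x k.+1 - y k) ^+ 2)%:E)%E,
      (conj_ext ha (- s k.+1) <= (1 - eta)%:E * conj_ext ha (- s k)
          - eta%:E * ha (x k.+1)
          - (eta * dotp (x k.+1) (gradf (y k)))%:E
          + (eta ^+ 2 / (2 * alpha)
             * dual_norm nrm (gradf (y k) - s k) ^+ 2)%:E)%E,
      (ha (y k.+1) <= eta%:E * ha (x k.+1) + (1 - eta)%:E * ha (y k)
          - (alpha * eta * (1 - eta) / 2 * nrm (x k.+1 - y k) ^+ 2)%:E)%E
    & (conj_fun f (s k.+1) <= eta%:E * conj_fun f (gradf (y k))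
          + (1 - eta)%:E * conj_fun f (s k)
          - (eta * (1 - eta) / (2 * L)
             * dual_norm nrm (gradf (y k) - s k) ^+ 2)%:E)%E].
Proof.
(* closedness and the bounded domain only serve the existence of the argmin
   x_{k+1}, which is given here *)
move=> nrmP f_convex gradfP L_gt0 gradf_lip _ [h_neqNy _] h_convex _ w_ge0 _
  w_sc [Mw w_le] alpha_gt0 eta ha y0_dom x_min y_step s_step k.
have eta01 : 0 <= eta <= 1.
  have La_gt0 : 0 < L + alpha by rewrite addr_gt0.
  rewrite /eta divr_ge0 ?(ltW alpha_gt0) ?(ltW La_gt0) //=.
  by rewrite ler_pdivrMr // mul1r lerDr ltW.
have w_fin z : edom h z -> (w z < +oo)%E.
  by move=> /w_le /le_lt_trans; apply; exact: ltry.
have x_dom j : edom h (x j.+1)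
  := argmin_edom h_neqNy w_ge0 w_fin alpha_gt0 (x_min j) y0_dom.
have y_dom j : edom h (y j).
  elim: j => [//|j IH]; rewrite y_step [X in edom h X]addrC.
  exact: edom_convex (x_dom j) IH eta01.
rewrite y_step s_step; split.
- exact: smooth_step_conj.
- by apply: halpha_conj_smooth => //; case/andP: eta01.
- by rewrite [(1 - eta) *: y k + _]addrC; apply: halpha_strong_convex.
- exact: conj_fun_strong_convex.
Qed.
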